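(* Let $a>0$ and $f\in\mathcal{F}(\mathbb{L}_a)$. Let $g:\mathbb{R}_{\ge0}\to\mathbb{R}$ satisfy: (1) $g$ is $a$-periodic; (2) $g(0)>0$; (3) the even extension of $g$ to $\mathbb{R}$ has an $a$-periodic Fourier series $S_N(\xi)=\sum_{k=0}^N a_k\cos(2\pi k\xi/a)$ with all coefficients $a_k\ge0$; (4) $S_N(\xi)\to g(\xi)$ for every $\xi$. Then $|g|\,f\in\mathcal{F}(\mathbb{L}_a)$.
   Context: $\mathbb{L}=\{x\in\mathbb{R}\setminus\mathbb{Q}:\ \forall n\in\mathbb{N}\ \exists q\in\mathbb{N}\text{ with }\|qx\|<q^{-n}\}$ is the set of Liouville numbers, where $\|x\|=\min_{m\in\mathbb{Z}}|x-m|$, and for $a>0$, $\mathbb{L}_a=\mathbb{L}+\frac1a\mathbb{Z}=\{x+m/a: x\in\mathbb{L},m\in\mathbb{Z}\}$. For a finite Borel measure $\mu$ on $\mathbb{R}$, $\hat\mu(\xi)=\int e^{-2\pi i x\xi}\,d\mu(x)$. For a Borel set $E\subset\mathbb{R}$, $\mathcal{P}(E)$ denotes the Borel probability measures $\mu$ on $\mathbb{R}$ with $\mu(\mathbb{R}\setminus E)=0$. For a function $f$ with values in $\mathbb{R}_{\ge0}$ defined at least on $[M_0,\infty)$ for some $M_0$, we write $f\in\mathcal{F}(E)$ if there exist $\mu\in\mathcal{P}(E)$ and constants $c,M>0$ such that $|\hat\mu(\xi)|\le c\,f(|\xi|)$ for all $\xi\in\mathbb{R}$ with $|\xi|\ge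 M$. *)

From HB Require Import structures.
From mathcomp Require Import all_boot all_order all_algebra.
From mathcomp Require Import all_classical all_reals all_analysis.
Set Implicit Arguments. Unset Strict Implicit. Unset Printing Implicit Defensive.
Import Order.TTheory GRing.Theory Num.Theory.
Import numFieldNormedType.Exports.
Local Open Scope classical_set_scope.
Local Open Scope ring_scope.

Section Defs.
Variable R : realType.

Definition distZ (x : R) : R :=
  Num.min (x - (Num.floor x)%:~R) ((Num.floor x + 1)%:~R - x).

Definition irrational (x : R) : Prop := ~ exists q : rat, x = ratr q.

(* Liouville numbers (denominators q >= 2, the standard convention) *)
Definition Liouville : set R :=
  [set x | irrational x /\
     forall n : nat, exists q : nat, (2 <= q)%N /\ distZ (q%:R * x) < (q%:R ^- n)].

Definition Liouville_a (a : R) : set R :=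
  [set y | exists x m, Liouville x /\ y = x + m%:~R / a].

(* real and imaginary parts of hat mu (xi) = int e^{-2 pi i x xi} d mu(x) *)
Definition ft_re (mu : probability R R) (xi : R) : R :=
  Rintegral mu setT (fun x => cos (2 * pi * x * xi)).
Definition ft_im (mu : probability R R) (xi : R) : R :=
  - Rintegral mu setT (fun x => sin (2 * pi * x * xi)).
Definition ft_abs (mu : probability R R) (xi : R) : R :=
  Num.sqrt (ft_re mu xi ^+ 2 + ft_im mu xi ^+ 2).

Definition prob_on (E : set R) (mu : probability R R) : Prop :=
  mu (~` E) = 0%E.

Definition inF (E : set R) (f : R -> R) : Prop :=
  (exists M0 : R, forall x, M0 <= x -> 0 <= f x) /\
  exists (mu : probability R R) (c M : R),
    [/\ prob_on E mu, 0 < c, 0 < M &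
      forall xi, M <= `|xi| -> ft_abs mu xi <= c * f `|xi|].

Definition even_ext (g : R -> R) : R -> R := fun x => g `|x|.

Definition fcoef (a : R) (g : R -> R) (k : nat) : R :=
  (if k == 0%N then a^-1 else 2 / a) *
  Rintegral lebesgue_measure `[- (a / 2), a / 2]
    (fun x => even_ext g x * cos (2 * pi * k%:R * x / a)).

Definition fpartial (a : R) (g : R -> R) (N : nat) (xi : R) : R :=
  \sum_(0 <= k < N.+1) fcoef a g k * cos (2 * pi * k%:R * xi / a).

End Defs.

From HB Require Import structures.
From mathcomp Require Import all_boot all_order all_algebra.
From mathcomp Require Import all_classical all_reals all_analysis.
From mathcomp Require Import measurable_realfun ring.
Import Order.TTheory GRing.Theory Num.Theory.
Import numFieldNormedType.Exports.
Local Open Scope classical_set_scope.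
Local Open Scope ring_scope.

(* Write g(xi)/g(0) = \sum_k w_k (e^{2 pi i k xi/a} + e^{-2 pi i k xi/a}) with
   weights w_k = a_k/(2 g(0)) >= 0 summing to 1/2 (evaluate the Fourier series at
   xi = 0).  If mu in P(L_a) witnesses f in F(L_a), the mixture
   nu = \sum_k w_k (mu(. - k/a) + mu(. + k/a)) of translates of mu is again a
   probability measure carried by L_a = L_a + (1/a)Z, and by the addition
   formulas for cos and sin its Fourier transform is mu^(xi) g(|xi|)/g(0), whence
   |nu^(xi)| <= (c/g(0)) |g(|xi|)| f(|xi|). *)

Definition translate {R : realType} (t : R) : R -> R := fun x => x + t.

Lemma measurable_translate {R : realType} (t : R) :
  measurable_fun setT (translate t).
Proof. by apply: measurable_funD => //; exact: measurable_cst. Qed.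

HB.instance Definition _ {R : realType} (t : R) :=
  isMeasurableFun.Build _ _ R R (translate t) (measurable_translate t).

Section bounded_integral.
Context {d} {T : measurableType d} {R : realType}.
Implicit Types (m : {measure set T -> \bar R}) (h : T -> R).
Local Open Scope ereal_scope.

Lemma integrable_normr_le1 m h : m setT < +oo ->
  measurable_fun setT h -> (forall x, `|h x| <= 1)%R ->
  m.-integrable setT (EFin \o h).
Proof.
move=> mfin mh hb; apply: measurable_bounded_integrable => //.
by exists 1%R; split => // M M1 x _; exact: le_trans (hb x) (ltW M1).
Qed.

Lemma integrable_probability_normr_le1 (P : probability T R) h :
  measurable_fun setT h -> (forall x, `|h x| <= 1)%R ->
  P.-integrable setT (EFin \o h).
Proof. by apply: integrable_normr_le1; rewrite /= probability_setT ltry. Qed.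

Lemma abse_integral_le_mass m (f : T -> \bar R) : measurable_fun setT f ->
  (forall x, 0 <= f x <= 1) -> `|\int[m]_(x in setT) f x| <= m setT.
Proof.
move=> mf f01.
rewrite gee0_abs; last by apply: integral_ge0 => x _; case/andP: (f01 x).
apply: (@le_trans _ _ (\int[m]_(x in setT) cst 1 x)).
  by apply: ge0_le_integral => // x _; case/andP: (f01 x).
by rewrite integral_cst// mul1e.
Qed.

Lemma integral_mscale_normr_le1 (r : {nonneg R}) m h : m setT < +oo ->
  measurable_fun setT h -> (forall x, `|h x| <= 1)%R ->
  \int[mscale r m]_(x in setT) (h x)%:E =
  r%:num%:E * \int[m]_(x in setT) (h x)%:E.
Proof.
move=> mfin mh hb.
have mhE : measurable_fun setT (EFin \o h) by exact/measurable_EFinP.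
rewrite [LHS]integralE ge0_integral_mscale//; last exact: measurable_funepos.
rewrite ge0_integral_mscale//; last exact: measurable_funeneg.
rewrite -muleBr -?integralE//.
by apply: fin_num_adde_defl; rewrite fin_numN;
  apply: integrable_neg_fin_num => //; exact: integrable_normr_le1.
Qed.

End bounded_integral.

Lemma normr_Rintegral_le1 {R : realType} (P : probability R R) (h : R -> R) :
  measurable_fun setT h -> (forall x, `|h x| <= 1) ->
  `|\int[P]_(x in setT) h x| <= 1.
Proof.
move=> mh hb.
have Pfin : (P setT < +oo)%E by rewrite probability_setT ltry.
apply: (le_trans (le_normr_Rintegral _ (integrable_normr_le1 _ _ Pfin mh hb))) => //.
apply: (@le_trans _ _ (\int[P]_(x in setT) (1:R))).
  apply: le_Rintegral => //; apply: integrable_normr_le1 => //.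
  - exact: measurableT_comp.
  - by move=> x; rewrite normr_id.
  - by move=> x; rewrite normr1.
by rewrite Rintegral_cst// mul1r -[leRHS](congr1 fine (probability_setT P)).
Qed.

Lemma eseries_EFin {R : realType} {u : nat -> R} {l : R} :
  series u @ \oo --> l -> (\sum_(k <oo) (u k)%:E = l%:E)%E.
Proof.
move=> ul; rewrite (_ : (fun n => _) = EFin \o series u); last first.
  by apply/funext => n; rewrite /= sumEFin.
by rewrite EFin_lim; [rewrite (cvg_lim _ ul) | exact: cvgP ul].
Qed.

Lemma cvg_series_dominated {R : realType} (u v : nat -> R) :
  (forall k, `|u k| <= v k) -> cvgn (series v) -> cvgn (series u).
Proof.
move=> uv cv; apply: normed_cvg; apply: (@series_le_cvg _ _ v) => // k.
- exact: normr_ge0.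
- exact: le_trans (normr_ge0 _) (uv k).
Qed.

Section translate_mixture.
Context {R : realType} (mu : probability R R) (t w : nat -> R).
Hypothesis w_ge0 : forall k, 0 <= w k.

Definition translate_mixture :=
  mseries (fun k => mscale (NngNum (w_ge0 k)) (distribution mu (translate (t k)))) 0.

Let component_setT k :
  mscale (NngNum (w_ge0 k)) (distribution mu (translate (t k))) setT = (w k)%:E.
Proof. by rewrite /= /mscale /= probability_setT mule1. Qed.

Variable s : R.
Hypothesis w_sum : series w @ \oo --> s.
Local Open Scope ereal_scope.

Lemma translate_mixture_setT : translate_mixture setT = s%:E.
Proof.
rewrite -(eseries_EFin w_sum); congr (limn _); apply/funext => n.
by apply: eq_bigr => k _; exact: component_setT.
Qed.

Lemma translate_mixture_null (A : set R) : mu A = 0 ->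
  (forall k x, A (x + t k)%R <-> A x) -> translate_mixture A = 0.
Proof.
move=> muA tA; apply: eseries0 => k _ _.
rewrite /= /mscale /= /distribution /pushforward /=.
rewrite (_ : translate (t k) @^-1` A = A) ?muA ?mule0//.
by apply/seteqP; split => x; rewrite /translate /=; apply tA.
Qed.

Section integral.
Variable h : R -> R.
Hypothesis mh : measurable_fun setT h.
Hypothesis h_le1 : forall x, (`|h x| <= 1)%R.

Let measurable_h_translate (k : nat) :
  measurable_fun setT (fun x : R => h (x + t k)%R).
Proof. exact: measurableT_comp mh (measurable_translate (t k)). Qed.

Lemma is_cvg_series_translate_integral :
  cvgn (series (fun k => w k * \int[mu]_(x in setT) h (x + t k))%R).
Proof.
apply: (@cvg_series_dominated _ _ w _ (cvgP _ w_sum)) => k.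
rewrite normrM ger0_norm//; apply: ler_piMr => //.
exact: normr_Rintegral_le1.
Qed.

Let abse_integral_component_le k (f : R -> \bar R) : measurable_fun setT f ->
  (forall x, 0 <= f x <= 1) ->
  `|\int[mscale (NngNum (w_ge0 k)) (distribution mu (translate (t k)))]_(x in setT)
      f x| <= (w k)%:E.
Proof.
by move=> mf f01; rewrite -component_setT; exact: abse_integral_le_mass.
Qed.

Let summable_w : \sum_(k <oo) (w k)%:E < +oo.
Proof. by rewrite (eseries_EFin w_sum) ltry. Qed.

Lemma integral_translate_mixture :
  \int[translate_mixture]_(x in setT) (h x)%:E =
  (limn (series (fun k => w k * \int[mu]_(x in setT) h (x + t k))%R))%:E.
Proof.
have mhE : measurable_fun setT (EFin \o h) by exact/measurable_EFinP.
have h_parts01 x : (0 <= (EFin \o h)^\+ x <= 1) && (0 <= (EFin \o h)^\- x <= 1).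
  have /andP[hN h1] : (-1 <= h x <= 1)%R by rewrite -ler_norml.
  rewrite funepos_ge0 funeneg_ge0 funeposE funenegE /= !ge_max lee01 !lee_fin h1.
  by rewrite lerNl hN.
rewrite integral_measure_series//.
- rewrite (_ : (fun n => _) =
      EFin \o series (fun k => w k * \int[mu]_(x in setT) h (x + t k))%R).
    by rewrite EFin_lim//; exact: is_cvg_series_translate_integral.
  apply/funext => n /=; rewrite -sumEFin; apply: eq_bigr => k _.
  have mu_int : mu.-integrable setT (EFin \o (fun x => h (x + t k)%R)).
    exact: integrable_probability_normr_le1.
  rewrite integral_mscale_normr_le1//; last by rewrite /= probability_setT ltry.
  rewrite integral_distribution// [RHS]EFinM /Rintegral fineK//.
  exact: integrable_fin_num mu_int.
- move=> k; apply: integrable_normr_le1 => //.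
  by rewrite /= component_setT ltry.
- apply: le_lt_trans summable_w; apply: lee_nneseries => // k _.
  apply: abse_integral_component_le; first exact: measurable_funeneg mhE.
  by move=> x; case/andP: (h_parts01 x).
- apply: le_lt_trans summable_w; apply: lee_nneseries => // k _.
  apply: abse_integral_component_le; first exact: measurable_funepos mhE.
  by move=> x; case/andP: (h_parts01 x).
Qed.

End integral.
End translate_mixture.

Lemma cvg_series_mulr {R : realFieldType} (u : nat -> R) (c l : R) :
  series u @ \oo --> l -> series (fun k => u k * c) @ \oo --> l * c.
Proof.
move=> ul; rewrite (_ : series _ = fun n => series u n * c); first exact: cvgMr_tmp.
by apply/funext => n; rewrite /series /= mulr_suml.
Qed.

Section fourier_translate.
Context {R : realType} (mu : probability R R) (xi : R).

Let measurable_trig (f : R -> R) : continuous f ->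
  measurable_fun setT (fun x : R => f (2 * pi * x * xi)).
Proof.
move=> cf; apply: measurableT_comp; first exact: continuous_measurable_fun.
by apply: measurable_funM => //; apply: measurable_funM => //; exact: measurable_cst.
Qed.

Let integrable_trig_translate (f : R -> R) (t : R) : continuous f ->
  (forall x, `|f x| <= 1) ->
  mu.-integrable setT (EFin \o (fun x => f (2 * pi * (x + t) * xi))).
Proof.
move=> cf f_le1; apply: integrable_probability_normr_le1 => //.
exact: measurableT_comp (measurable_trig f cf) (measurable_translate t).
Qed.

Lemma measurable_cos_fourier : measurable_fun setT (fun x : R => cos (2 * pi * x * xi)).
Proof. exact: measurable_trig _ (@continuous_cos R). Qed.

Lemma measurable_sin_fourier : measurable_fun setT (fun x : R => sin (2 * pi * x * xi)).
Proof. exact: measurable_trig _ (@continuous_sin R). Qed.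

Lemma Rintegral_cos_translate_sym (t : R) :
  \int[mu]_(x in setT) cos (2 * pi * (x + t) * xi) +
  \int[mu]_(x in setT) cos (2 * pi * (x - t) * xi) =
  2 * cos (2 * pi * t * xi) * ft_re mu xi.
Proof.
have int_cos u := integrable_trig_translate cos u (@continuous_cos R) (@cos_max R).
rewrite -RintegralD// /ft_re -RintegralZl//; last first.
  apply: integrable_probability_normr_le1; first exact: measurable_cos_fourier.
  by move=> x; exact: cos_max.
apply: eq_Rintegral => x _.
have -> : 2 * pi * (x + t) * xi = 2 * pi * x * xi + 2 * pi * t * xi by ring.
have -> : 2 * pi * (x - t) * xi = 2 * pi * x * xi - 2 * pi * t * xi by ring.
by rewrite cosD cosB; ring.
Qed.

Lemma Rintegral_sin_translate_sym (t : R) :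
  \int[mu]_(x in setT) sin (2 * pi * (x + t) * xi) +
  \int[mu]_(x in setT) sin (2 * pi * (x - t) * xi) =
  - (2 * cos (2 * pi * t * xi) * ft_im mu xi).
Proof.
have int_sin u := integrable_trig_translate sin u (@continuous_sin R) (@sin_max R).
rewrite -RintegralD// /ft_im mulrN opprK -RintegralZl//; last first.
  apply: integrable_probability_normr_le1; first exact: measurable_sin_fourier.
  by move=> x; exact: sin_max.
apply: eq_Rintegral => x _.
have -> : 2 * pi * (x + t) * xi = 2 * pi * x * xi + 2 * pi * t * xi by ring.
have -> : 2 * pi * (x - t) * xi = 2 * pi * x * xi - 2 * pi * t * xi by ring.
by rewrite sinD sinB; ring.
Qed.

End fourier_translate.

Section symmetric_translate_mixture.
Context {R : realType} (mu : probability R R) (t w : nat -> R).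
Hypothesis w_ge0 : forall k, 0 <= w k.
Hypothesis w_sum : series w @ \oo --> (2^-1 : R).

Definition symmetric_translate_mixture := measure_add
  (translate_mixture mu t w w_ge0) (translate_mixture mu (fun k => - t k) w w_ge0).

Lemma symmetric_translate_mixture_setT :
  symmetric_translate_mixture setT = 1%E.
Proof.
rewrite /symmetric_translate_mixture measure_addE.
transitivity ((2^-1)%:E + (2^-1)%:E : \bar R).
  by congr (_ + _); exact: translate_mixture_setT.
by rewrite -EFinD; congr EFin; field.
Qed.

HB.instance Definition _ := Measure.copy symmetric_translate_mixture
  (measure_add (translate_mixture mu t w w_ge0)
     (translate_mixture mu (fun k => - t k) w w_ge0)).
HB.instance Definition _ := Measure_isProbability.Build _ _ _
  symmetric_translate_mixture symmetric_translate_mixture_setT.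

Definition symmetric_translate_mixture_prob : probability R R :=
  symmetric_translate_mixture.

Lemma symmetric_translate_mixture_null (A : set R) : mu A = 0%E ->
  (forall k x, A (x + t k) <-> A x) -> symmetric_translate_mixture A = 0%E.
Proof.
move=> muA tA; rewrite /symmetric_translate_mixture measure_addE.
transitivity (0 + 0 : \bar R); last exact: adde0.
congr (_ + _); apply: translate_mixture_null => // k x /=.
by rewrite -{2}(subrK (t k) x); exact: iff_sym (tA k _).
Qed.

Lemma integral_symmetric_translate_mixture (h : R -> R) (l : R) :
  measurable_fun setT h -> (forall x, `|h x| <= 1) ->
  series (fun k => w k * (\int[mu]_(x in setT) h (x + t k) +
                          \int[mu]_(x in setT) h (x - t k))) @ \oo --> l ->
  (\int[symmetric_translate_mixture]_(x in setT) (h x)%:E = l%:E)%E.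
Proof.
move=> mh h_le1 hl.
have int_mixture t' : (translate_mixture mu t' w w_ge0).-integrable setT (EFin \o h).
  apply: integrable_normr_le1 => //.
  by rewrite (_ : _ setT = (2^-1)%:E) ?ltry //; exact: translate_mixture_setT.
rewrite integral_measure_add//; [|exact: int_mixture..].
rewrite !(integral_translate_mixture _ _ _ _ _ w_sum)// -EFinD -lim_seriesD;
  try exact: (is_cvg_series_translate_integral _ _ _ _ _ w_sum).
congr EFin; apply: cvg_lim => //; apply: (cvg_trans _ hl).
by apply/near_eq_cvg/nearW => n; apply: eq_bigr => k _; rewrite /= mulrDr.
Qed.

Variables xi G : R.
Hypothesis series_cos :
  series (fun k => w k * (2 * cos (2 * pi * t k * xi))) @ \oo --> G.

Lemma ft_re_symmetric_translate_mixture :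
  ft_re symmetric_translate_mixture_prob xi = G * ft_re mu xi.
Proof.
rewrite /ft_re /Rintegral.
rewrite (integral_symmetric_translate_mixture _ (G * ft_re mu xi))//.
- exact: measurable_cos_fourier.
- by move=> x; exact: cos_max.
under eq_fun do rewrite Rintegral_cos_translate_sym mulrA.
exact: cvg_series_mulr.
Qed.

Lemma ft_im_symmetric_translate_mixture :
  ft_im symmetric_translate_mixture_prob xi = G * ft_im mu xi.
Proof.
rewrite {1}/ft_im /Rintegral.
rewrite (integral_symmetric_translate_mixture _ (- (G * ft_im mu xi)))//=.
- by rewrite opprK.
- exact: measurable_sin_fourier.
- by move=> x; exact: sin_max.
under eq_fun do rewrite Rintegral_sin_translate_sym -mulrN mulrA.
by rewrite -mulrN; exact: cvg_series_mulr.
Qed.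

Lemma ft_abs_symmetric_translate_mixture :
  ft_abs symmetric_translate_mixture_prob xi = `|G| * ft_abs mu xi.
Proof.
rewrite /ft_abs ft_re_symmetric_translate_mixture ft_im_symmetric_translate_mixture.
by rewrite !exprMn -mulrDr sqrtrM ?sqr_ge0// sqrtr_sqr.
Qed.

End symmetric_translate_mixture.

Lemma Liouville_a_translate {R : realType} (a : R) (z : int) (x : R) :
  Liouville_a a x -> Liouville_a a (x + z%:~R / a).
Proof.
case=> y [m [Ly ->]]; exists y, (m + z); split => //.
by rewrite intrD mulrDl addrA.
Qed.

Lemma notLiouville_a_translate {R : realType} (a : R) (k : nat) (x : R) :
  (~` Liouville_a a) (x + k%:R / a) <-> (~` Liouville_a a) x.
Proof.
split => /= notLx Lx; apply: notLx.
- exact: (Liouville_a_translate a k).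
- have := Liouville_a_translate a (- k%:Z) _ Lx.
  by rewrite mulrNz pmulrn mulNr addrK.
Qed.

Section fourier_weight.
Context {R : realType} (a : R) (g : R -> R).
Hypothesis g0_neq0 : g 0 != 0.

Definition fourier_weight k := fcoef a g k / (2 * g 0).

Lemma series_fourier_weight_cos xi n :
  series (fun k => fourier_weight k * (2 * cos (2 * pi * (k%:R / a) * xi))) n.+1 =
  fpartial a g n xi / g 0.
Proof.
rewrite /series /= /fpartial mulr_suml; apply: eq_bigr => k _.
have -> : 2 * pi * (k%:R / a) * xi = 2 * pi * k%:R * xi / a by ring.
by rewrite /fourier_weight; field.
Qed.

Lemma cvg_series_fourier_weight_cos xi :
  (fun N => fpartial a g N xi) @ \oo --> even_ext g xi ->
  series (fun k => fourier_weight k * (2 * cos (2 * pi * (k%:R / a) * xi))) @ \oo -->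
  g `|xi| / g 0.
Proof.
move=> S_g; rewrite -cvg_shiftS /=.
under eq_fun do rewrite series_fourier_weight_cos.
exact: cvgMr_tmp S_g.
Qed.

Lemma cvg_series_fourier_weight :
  (fun N => fpartial a g N 0) @ \oo --> even_ext g 0 ->
  series fourier_weight @ \oo --> (2^-1 : R).
Proof.
move=> /cvg_series_fourier_weight_cos; rewrite normr0 divff// => S_g.
have -> : fourier_weight =
    (fun k => fourier_weight k * (2 * cos (2 * pi * (k%:R / a) * 0)) * 2^-1).
  by apply/funext => k; rewrite mulr0 cos0 mulr1 -mulrA divff ?mulr1 ?pnatr_eq0.
by have := cvg_series_mulr _ (2^-1) _ S_g; rewrite mul1r.
Qed.

End fourier_weight.

Theorem proposition3p3 (R : realType) (a : R) (f g : R -> R) :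
  0 < a ->
  inF (Liouville_a a) f ->
  (forall x, 0 <= x -> g (x + a) = g x) ->
  0 < g 0 ->
  lebesgue_measure.-integrable `[- (a / 2), a / 2] (EFin \o even_ext g) ->
  (forall k, 0 <= fcoef a g k) ->
  (forall xi, (fun N => fpartial a g N xi) @ \oo --> even_ext g xi) ->
  inF (Liouville_a a) (fun x => `|g x| * f x).
Proof.
move=> _ [[M0 f_ge0] [mu [c [M [mu_La c_gt0 M_gt0 ft_mu_le]]]]] _ g0_gt0 _
  fcoef_ge0 g_fourier.
have g0_neq0 : g 0 != 0 by rewrite gt_eqF.
have w_ge0 k : 0 <= fourier_weight a g k.
  by rewrite /fourier_weight divr_ge0 ?fcoef_ge0// mulr_ge0// ltW.
have w_sum := cvg_series_fourier_weight a g g0_neq0 (g_fourier 0).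
split; first by exists M0 => x x_ge; rewrite mulr_ge0 ?f_ge0.
exists (symmetric_translate_mixture_prob mu (fun k => k%:R / a) _ w_ge0 w_sum).
exists (c / g 0), M; split => //; [|by rewrite divr_gt0|].
  exact: symmetric_translate_mixture_null (notLiouville_a_translate a).
move=> xi /ft_mu_le ft_le.
have S_g := cvg_series_fourier_weight_cos a g g0_neq0 _ (g_fourier xi).
erewrite ft_abs_symmetric_translate_mixture; last exact: S_g.
rewrite normrM (gtr0_norm (_ : 0 < (g 0)^-1)) ?invr_gt0//.
rewrite [leLHS]mulrAC [leLHS]mulrC [leRHS]mulrAC [leRHS]mulrC.
rewrite ler_pM2l ?invr_gt0//.
by rewrite mulrCA ler_wpM2l.
Qed.
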